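(* Let $n,v\ge1$, $\mathcal{R}=\mathbb{F}_q[x_1,\dots,x_v]/\langle x_1^{i_1}\cdots x_v^{i_v}\mid i_1+\dots+i_v=n\rangle$, and let $I$ be an ideal of $\mathcal{R}$. Then the number of additive characters $\psi$ on $\mathcal{R}$ such that $I$ is the ideal maximally contained in $\ker(\psi)$ (i.e. $I$ is contained in $\ker\psi$ and contains every ideal of $\mathcal{R}$ contained in $\ker\psi$) is \[ \frac{|\mathcal{R}|}{|I|}\cdot\begin{cases}1 & \dim(\operatorname{Soc}(\mathcal{R}/I))=0,\\ 1-\frac1q & \dim(\operatorname{Soc}(\mathcal{R}/I))=1,\\ 0 & \text{otherwise.}\end{cases} \]
   Context: The socle $\operatorname{Soc}(\mathcal{R}/I)$ is the $\mathbb{F}_q$-subspace $\{f\in\mathcal{R}/I\mid x_1f=0,\dots,x_vf=0\}$ of $\mathcal{R}/I$, and $\dim$ denotes dimension over $\mathbb{F}_q$. An additive character is a homomorphism from $(\mathcal{R},+)$ to the complex unit circle. *)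

From HB Require Import structures.
From mathcomp Require Import all_boot all_order all_algebra all_field.
Set Implicit Arguments. Unset Strict Implicit. Unset Printing Implicit Defensive.
Import Order.TTheory GRing.Theory Num.Theory.
Local Open Scope ring_scope.

Section TruncPoly.
Variables (F : finFieldType) (v n : nat).

Definition mono := {e : {ffun 'I_v -> 'I_n} | (\sum_i (e i : nat) < n)%N}.

(* R = F_q[x_1..x_v] / <monomials of degree n>, represented by the F-basis of
   monomials of degree < n: an element is its coefficient function. *)
Definition Rq := {ffun mono -> F^o}.

Definition Rmul (f g : Rq) : Rq :=
  [ffun m : mono => \sum_(a : mono) \sum_(b : mono |
      [forall i, ((val a i : nat) + val b i)%N == val m i]) f a * g b].

Definition Rvar (i : 'I_v) : Rq :=
  [ffun m : mono => if [forall j, (val m j : nat) == (j == i)] then 1 else 0].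

Definition is_ideal (J : {set Rq}) : Prop :=
  [/\ 0 \in J,
      (forall x y, x \in J -> y \in J -> x - y \in J) &
      (forall r x, x \in J -> Rmul r x \in J)].

Definition is_add_char (psi : {ffun Rq -> algC}) : Prop :=
  (forall x, `|psi x| = 1) /\ (forall x y, psi (x + y) = psi x * psi y).

Definition in_ker (psi : {ffun Rq -> algC}) (x : Rq) : Prop := psi x = 1.

Definition max_ideal_in_ker (I : {set Rq}) (psi : {ffun Rq -> algC}) : Prop :=
  (forall x, x \in I -> in_ker psi x) /\
  (forall J, is_ideal J -> (forall x, x \in J -> in_ker psi x) -> J \subset I).

(* preimage in R of Soc(R/I) *)
Definition soc_pre (I : {set Rq}) : {set Rq} :=
  [set f | [forall i, Rmul (Rvar i) f \in I]].

(* dim_F Soc(R/I) = dim_F (soc_pre I) - dim_F I, since Soc(R/I) = soc_pre I / I *)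
Definition dim_soc (I : {set Rq}) : nat :=
  (\dim <<enum (soc_pre I)>>%VS - \dim <<enum I>>%VS)%N.

End TruncPoly.

From mathcomp Require Import all_boot all_order all_algebra all_field.
From mathcomp Require Import zify.
Import GRing.Theory Num.Theory.
Local Open Scope ring_scope.
Set Implicit Arguments. Unset Strict Implicit. Unset Printing Implicit Defensive.

(* Write R = F^M, M the monomials of degree < n, and <a, x> = \sum_m a_m x_m.
   Fixing a nontrivial additive character chi of F, the additive characters of
   R are the pairwise distinct psi_a = chi <a, ->, and an F-subspace lies in
   ker psi_a iff it is orthogonal to a.  Let S be the preimage of Soc(R/I).
   Every ideal J not contained in I meets S \ I (multiply an element of J \ I
   by variables until it reaches the socle), and I + F f is an ideal for every
   f in S, because R acts on S/I through constant terms.  Hence I is maximal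
   in ker psi_a iff a is orthogonal to I and no element of S \ I is orthogonal
   to a.  As the orthogonal of a in S has codimension at most 1, this holds for
   every a in I^perp when S = I, for the a in I^perp \ S^perp when
   dim S/I = 1, and never otherwise; |H^perp| = |R|/|H| gives the count. *)

Section FinSpace.
Variables (F : finFieldType) (T : finType).
Local Notation V := {ffun T -> F^o}.
Implicit Types (a x y : V) (H I K S : {set V}).

Lemma ffunZE (c : F) x t : (c *: x) t = c * x t.
Proof. by rewrite ffunE. Qed.

Lemma ffunDE x y t : (x + y) t = x t + y t.
Proof. by rewrite ffunE. Qed.

Lemma ffunBE x y t : (x - y) t = x t - y t.
Proof. by rewrite !ffunE. Qed.

Definition delta (t0 : T) : V := [ffun t => if t == t0 then 1 else 0].

Definition dot a x : F := \sum_t a t * x t.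

Lemma dotC a x : dot a x = dot x a.
Proof. by apply: eq_bigr => t _; rewrite mulrC. Qed.

Lemma dotDr a x y : dot a (x + y) = dot a x + dot a y.
Proof. by rewrite /dot -big_split; apply: eq_bigr => t _; rewrite ffunDE mulrDr. Qed.

Lemma dotBr a x y : dot a (x - y) = dot a x - dot a y.
Proof. by rewrite /dot -sumrB; apply: eq_bigr => t _; rewrite ffunBE mulrBr. Qed.

Lemma dotZr a (c : F) x : dot a (c *: x) = c * dot a x.
Proof. by rewrite /dot mulr_sumr; apply: eq_bigr => t _; rewrite ffunZE mulrCA. Qed.

Lemma dot0r a : dot a 0 = 0.
Proof. by rewrite -(subrr 0) dotBr subrr. Qed.

Lemma dotNl a x : dot (- a) x = - dot a x.
Proof. by rewrite dotC -sub0r dotBr dot0r sub0r dotC. Qed.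

Lemma dot_delta a t : dot a (delta t) = a t.
Proof.
rewrite /dot (bigD1 t) //= big1 ?addr0 => [|s /negbTE st]; first by rewrite ffunE eqxx mulr1.
by rewrite ffunE st mulr0.
Qed.

Lemma dot_eq0 a : [forall x, dot a x == 0] = (a == 0).
Proof.
apply/forallP/eqP => [a0|-> x]; last by rewrite dotC dot0r.
by apply/ffunP => t; rewrite ffunE -dot_delta; apply/eqP.
Qed.

Definition perp H := [set a | [forall h in H, dot a h == 0]].

Definition perp_in S a := [set z in S | dot a z == 0].

Section Subspace.
Variable H : {set V}.
Hypothesis sH : GRing.submod_closed H.

Lemma subspace0 : 0 \in H.
Proof. by case: sH. Qed.

Lemma subspaceD x y : x \in H -> y \in H -> x + y \in H.
Proof. by case: sH => _ Hlin xH yH; rewrite -[x]scale1r Hlin. Qed.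

Lemma subspaceZ (c : F) x : x \in H -> c *: x \in H.
Proof. by case: sH => H0 Hlin xH; rewrite -[_ *: x]addr0 Hlin. Qed.

Lemma subspaceB x y : x \in H -> y \in H -> x - y \in H.
Proof. by move=> xH yH; rewrite subspaceD // -scaleN1r subspaceZ. Qed.

Lemma mem_span_subspace x : (x \in <<enum H>>%VS) = (x \in H).
Proof.
apply/idP/idP => [xS|xH]; last by apply: memv_span; rewrite mem_enum.
rewrite (coord_span (X := in_tuple (enum H)) xS).
apply: (big_ind (fun x => x \in H)); [exact: subspace0 | exact: subspaceD |].
by move=> i _; rewrite subspaceZ // -mem_enum mem_nth.
Qed.

Lemma card_subspace : #|H| = (#|F| ^ \dim <<enum H>>)%N.
Proof. by rewrite -card_vspace; apply: eq_card => x; rewrite mem_span_subspace. Qed.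

Lemma card_subspace_gt0 : (0 < #|H|)%N.
Proof. by apply/card_gt0P; exists 0; apply: subspace0. Qed.

Lemma perp_in_submod_closed a : GRing.submod_closed (perp_in H a).
Proof.
split=> [|c x y]; first by rewrite inE subspace0 dot0r eqxx.
rewrite !inE => /andP [xH /eqP ax] /andP [yH /eqP ay].
by rewrite subspaceD ?subspaceZ // dotDr dotZr ax ay mulr0 addr0 eqxx.
Qed.

Lemma card_perp_in a : (#|H| <= #|F| * #|perp_in H a|)%N.
Proof.
have [/exists_inP [w wH aw] | /exists_inP aH] := boolP [exists w in H, dot a w != 0].
  pose w1 := (dot a w)^-1 *: w.
  have aw1 : dot a w1 = 1 by rewrite dotZr mulVf.
  have -> : (#|F| * #|perp_in H a| = #|setX [set: F] (perp_in H a)|)%N.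
    by rewrite cardsX cardsT.
  rewrite -(card_in_imset (f := fun z => (dot a z, z - dot a z *: w1)) (D := mem H));
    last by move=> z z' _ _ [az]; rewrite az => /addIr.
  apply/subset_leq_card/subsetP => _ /imsetP [z zH ->].
  by rewrite !inE subspaceB ?subspaceZ //= dotBr dotZr aw1 mulr1 subrr.
suff -> : perp_in H a = H by rewrite leq_pmull // ltnW // finNzRing_gt1.
apply/setP => z; rewrite inE; have [zH|//] := boolP (z \in H).
by apply/negPn/negP => az; apply: aH; exists z.
Qed.

End Subspace.

Lemma card_subspace_proper I K : GRing.submod_closed I -> GRing.submod_closed K ->
  I \proper K -> (#|F| * #|I| <= #|K|)%N.
Proof.
move=> sI sK /proper_card; rewrite !card_subspace // -expnS.
by rewrite !ltn_exp2l ?leq_exp2l // finNzRing_gt1.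
Qed.

End FinSpace.

Arguments delta {F T} t0.

(* t |-> z ^+ tau t, for a nonzero F_p-linear form tau and a primitive p-th root of unity z. *)
Lemma nontrivial_additive_char (F : finFieldType) : exists chi : F -> algC,
  [/\ forall s t, chi (s + t) = chi s * chi t, forall t, `|chi t| = 1 &
      exists u, chi u != 1].
Proof.
have [p pr_p charFp] := finPcharP F.
pose K := pPrimeCharType charFp.
have dim_gt0 : (0 < \dim (fullv : {vspace K}))%N.
  rewrite lt0n dimv_eq0; apply/negP => /eqP fullv0.
  by have := memvf (1 : K); rewrite fullv0 memv0 oner_eq0.
pose i0 := Ordinal dim_gt0; pose X := vbasis (fullv : {vspace K}).
pose tau (x : F) : 'F_p := coord X i0 (x : K).
have [z prim_z] := C_prim_root_exists (prime_gt0 pr_p).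
exists (fun t => z ^+ val (tau t)); split.
- have FpD (c d : 'F_p) : val (c + d) = ((val c + val d) %% p)%N.
    exact: (congr1 (modn _) (Fp_cast pr_p)).
  by move=> s t; rewrite -exprD /tau linearD FpD (prim_expr_mod prim_z).
- move=> t; rewrite normrX.
  suff -> : `|z| = 1 by rewrite expr1n.
  apply/eqP; rewrite -(pexpr_eq1 (prime_gt0 pr_p)) ?normr_ge0 //.
  by rewrite -normrX (prim_expr_order prim_z) normr1.
- exists (X`_i0 : K); rewrite /tau coord_free ?eqxx; last exact: basis_free (vbasisP _).
  rewrite -(prim_order_dvd prim_z) (val_Fp_nat pr_p 1 : val (true%:R : 'F_p) = _).
  rewrite modn_small ?prime_gt1 //.
  by rewrite dvdn1; apply: contraTneq pr_p => ->.
Qed.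

Section Characters.
Variables (F : finFieldType) (T : finType).
Local Notation V := {ffun T -> F^o}.
Implicit Types (a b x y : V) (H : {set V}).
Variable chi : F -> algC.
Hypothesis chiD : forall s t, chi (s + t) = chi s * chi t.
Hypothesis chi_norm : forall t, `|chi t| = 1.
Hypothesis chi_nontriv : exists u, chi u != 1.

Lemma chi_neq0 t : chi t != 0.
Proof. by rewrite -normr_eq0 chi_norm oner_eq0. Qed.

Lemma chi0 : chi 0 = 1.
Proof. by apply: (mulfI (chi_neq0 0)); rewrite mulr1 -chiD addr0. Qed.

Lemma chiNK t : chi (- t) * chi t = 1.
Proof. by rewrite -chiD addNr chi0. Qed.

Lemma chi_line_eq1 t : (forall c, chi (c * t) = 1) -> t = 0.
Proof.
move=> chi_ct; apply: contraTeq isT => t0; have [u chi_u] := chi_nontriv.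
by move: chi_u; rewrite -(chi_ct (u / t)) mulfVK ?eqxx.
Qed.

Lemma sum_hom_subgroup H (phi : V -> algC) y0 :
  {morph phi : x y / x + y >-> x * y} -> {in H &, forall x y, x - y \in H} ->
  y0 \in H -> phi y0 != 1 -> \sum_(h in H) phi h = 0.
Proof.
move=> phiD HB y0H phi_y0.
have H0 : 0 \in H by rewrite -(subrr y0) HB.
have HD x y : x \in H -> y \in H -> x + y \in H.
  by move=> xH yH; rewrite -[y]opprK HB // -sub0r HB.
set s := \sum_(h in H) phi h.
have s_y0 : s = s * phi y0.
  rewrite /s mulr_suml (reindex_inj (addIr y0)) /=.
  apply: eq_big => [h|h _]; last exact: phiD.
  by apply/idP/idP => hH; [rewrite -(addrK y0 h) HB | apply: HD].
have /eqP : s * (1 - phi y0) = 0 by rewrite mulrBr mulr1 -s_y0 subrr.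
by rewrite mulf_eq0 subr_eq0 [1 == _]eq_sym (negbTE phi_y0) orbF => /eqP.
Qed.

Lemma sum_chi_dot H a : GRing.submod_closed H ->
  \sum_(h in H) chi (dot a h) = if a \in perp H then #|H|%:R else 0.
Proof.
move=> sH; rewrite inE; case: ifP => [/forall_inP aH|].
  by rewrite (eq_bigr (fun _ => 1)) ?sumr_const // => h hH; rewrite (eqP (aH h hH)) chi0.
move/negbT; rewrite negb_forall_in => /exists_inP [z zH /negbTE az].
have [u chi_u] := chi_nontriv.
apply: (sum_hom_subgroup (y0 := (u / dot a z) *: z)).
- by move=> x y; rewrite dotDr chiD.
- exact: subspaceB.
- exact: subspaceZ.
- by rewrite dotZr mulfVK ?az.
Qed.

Lemma sum_chi_dotT x : \sum_a chi (dot a x) = if x == 0 then #|V|%:R else 0.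
Proof.
have sT : GRing.submod_closed [set: V] by split=> [|c y z _ _]; rewrite inE.
rewrite (eq_bigr (fun a => chi (dot x a))) => [|a _]; last by rewrite dotC.
have -> : \sum_a chi (dot x a) = \sum_(a in [set: V]) chi (dot x a).
  by apply: eq_bigl => a; rewrite inE.
rewrite sum_chi_dot // cardsT inE -dot_eq0.
by congr (if _ then _ else _); apply/forall_inP/forallP => [xT a|xT a _]; apply: xT.
Qed.

Lemma card_perp H : GRing.submod_closed H -> (#|perp H| * #|H|)%N = #|V|.
Proof.
move=> sH; apply/eqP; rewrite -(eqr_nat algC) natrM.
pose D := \sum_a \sum_(h in H) chi (dot a h).
have -> : #|perp H|%:R * #|H|%:R = D.
  by rewrite /D (eq_bigr _ (fun a _ => sum_chi_dot a sH)) -big_mkcond sumr_const mulr_natl.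
rewrite /D exchange_big /= (eq_bigr _ (fun h _ => sum_chi_dotT h)) -big_mkcondr /=.
by rewrite (big_pred1 (0 : V)) // => h /=; case: (h =P 0) => [->|]; rewrite ?subspace0 ?andbF.
Qed.

Definition char_of a : {ffun V -> algC} := [ffun x => chi (dot a x)].

Lemma char_of_norm a x : `|char_of a x| = 1.
Proof. by rewrite ffunE chi_norm. Qed.

Lemma char_ofD a x y : char_of a (x + y) = char_of a x * char_of a y.
Proof. by rewrite !ffunE dotDr chiD. Qed.

Lemma char_of_eq1 H a : GRing.submod_closed H ->
  (forall x, x \in H -> char_of a x = 1) <-> a \in perp H.
Proof.
move=> sH; rewrite inE; split=> [aH|/forall_inP aH x xH]; last by rewrite ffunE (eqP (aH x xH)) chi0.
apply/forall_inP => x xH; apply/eqP/chi_line_eq1 => c.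
by have := aH _ (subspaceZ sH c xH); rewrite ffunE dotZr.
Qed.

Lemma char_of_inj : injective char_of.
Proof.
move=> a b /ffunP ab; apply/eqP; rewrite -subr_eq0 -dot_eq0; apply/forallP => x; apply/eqP.
apply: chi_line_eq1 => c; rewrite -dotZr dotC dotBr chiD.
have := ab (c *: x); rewrite !ffunE dotC [dot b _]dotC => ->.
by rewrite mulrC chiNK.
Qed.

Lemma char_of_surj (psi : V -> algC) : (forall x, `|psi x| = 1) ->
  {morph psi : x y / x + y >-> x * y} -> exists a, forall x, psi x = char_of a x.
Proof.
move=> psi_norm psiD.
have psi0 : psi 0 = 1.
  have psi0_neq0 : psi 0 != 0 by rewrite -normr_eq0 psi_norm oner_eq0.
  by apply: (mulfI psi0_neq0); rewrite mulr1 -psiD addr0.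
have [/existsP [a /forallP psi_a] | /existsP no_a] :=
  boolP [exists a, [forall x, psi x * chi (dot a x) == 1]].
  exists (- a) => x; apply: (mulIf (chi_neq0 (dot a x))).
  by rewrite ffunE (eqP (psi_a x)) dotNl chiNK.
(* Otherwise \sum_x \sum_a psi x * chi (dot a x) would be both |V| and 0. *)
pose D := \sum_x \sum_a psi x * chi (dot a x).
have : D = #|V|%:R.
  rewrite /D (bigD1 (0 : V)) //= -mulr_sumr sum_chi_dotT eqxx psi0 mul1r.
  by rewrite big1 ?addr0 // => x /negbTE x0; rewrite -mulr_sumr sum_chi_dotT x0 mulr0.
suff -> : D = 0.
  by move/eqP; rewrite eq_sym pnatr_eq0 -cardsT cards_eq0 => /eqP/setP/(_ 0); rewrite !inE.
rewrite /D exchange_big big1 // => a _.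
have [x psi_x] : exists x, psi x * chi (dot a x) != 1.
  by apply/existsP; rewrite -negb_forall; apply/negP => psi_a; apply: no_a; exists a.
have -> : \sum_x psi x * chi (dot a x) = \sum_(x in [set: V]) psi x * chi (dot a x).
  by apply: eq_bigl => y; rewrite inE.
apply: (sum_hom_subgroup (y0 := x)) => //.
- by move=> y z; rewrite psiD dotDr chiD mulrACA.
- by move=> y z; rewrite !inE.
- by rewrite inE.
Qed.

End Characters.

Section Counting.
Variables (F : finFieldType) (T : finType).
Local Notation V := {ffun T -> F^o}.
Local Notation q := #|F|.
Variables I S : {set V}.
Hypotheses (sI : GRing.submod_closed I) (sS : GRing.submod_closed S) (IS : I \subset S).

Lemma sub_perp_in a : a \in perp I -> I \subset perp_in S a.
Proof.
move=> /[!inE] /forall_inP aI; apply/subsetP => z zI.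
by rewrite inE (subsetP IS) ?aI.
Qed.

Lemma perp_in_sub_codim1 a : #|S| = (q * #|I|)%N -> a \in perp I ->
  (perp_in S a \subset I) = (a \notin perp S).
Proof.
move=> cardS aI; have q_gt1 := finNzRing_gt1 F; have I_gt0 := card_subspace_gt0 sI.
apply/idP/idP => [aSI|].
  apply/negP => /[!inE] /forall_inP aS.
  have : (#|S| <= #|I|)%N.
    by apply/subset_leq_card/(subset_trans _ aSI)/subsetP => z zS; rewrite inE zS aS.
  by rewrite cardS -{2}[#|I|]mul1n leq_pmul2r // leqNgt q_gt1.
apply: contraR => aSI; rewrite inE; apply/forall_inP => z zS.
have sK := perp_in_submod_closed sS a.
have IK : I \proper perp_in S a by rewrite properEneq sub_perp_in // andbT; apply: contraNneq aSI => <-.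
have KS : perp_in S a \subset S by apply/subsetP => y /[!inE] /andP [].
have /subset_cardP/(_ KS) KSeq : #|perp_in S a| = #|S|.
  by apply/eqP; rewrite eqn_leq subset_leq_card // cardS card_subspace_proper.
by move: zS; rewrite -KSeq inE => /andP [].
Qed.

Lemma perp_in_sub_codim2 a : (q * (q * #|I|) <= #|S|)%N -> ~~ (perp_in S a \subset I).
Proof.
move=> cardS; have q_gt1 := finNzRing_gt1 F; have I_gt0 := card_subspace_gt0 sI.
apply/negP => /subset_leq_card KI.
have := leq_trans cardS (card_perp_in sS a).
rewrite leq_pmul2l ?(ltnW q_gt1) // => /(leq_trans)/(_ KI).
by rewrite -{2}[#|I|]mul1n leq_pmul2r // leqNgt q_gt1.
Qed.

Lemma card_perp_in_sub :
  (#|[set a in perp I | perp_in S a \subset I]|%:R : rat) =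
    #|V|%:R / #|I|%:R *
    (let d := (\dim <<enum S>> - \dim <<enum I>>)%N in
     if d == 0%N then 1 else if d == 1%N then 1 - q%:R^-1 else 0).
Proof.
have [chi [chiD chi_norm chi_nontriv]] := nontrivial_additive_char F.
have perpI := card_perp chiD chi_norm chi_nontriv sI.
have q_gt1 := finNzRing_gt1 F.
have I_gt0 := card_subspace_gt0 sI.
have I_neq0 : (#|I|%:R : rat) != 0 by rewrite pnatr_eq0 -lt0n.
have cardI := card_subspace sI; have cardS := card_subspace sS.
rewrite /=; set dI := \dim _ in cardI *; set dS := \dim _ in cardS *.
have dIS : (dI <= dS)%N by rewrite -(leq_exp2l _ _ q_gt1) -cardI -cardS subset_leq_card.
case: ifP => [/eqP d0 | /negbT d_neq0].
  have SI : S = I by apply/eqP; rewrite eq_sym eqEcard IS cardI cardS leq_exp2l //; lia.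
  have -> : [set a in perp I | perp_in S a \subset I] = perp I.
    by apply/setP => a; rewrite inE -{2}SI andb_idr // => _; apply/subsetP => z /[!inE] /andP [].
  by rewrite -perpI natrM mulfK // mulr1.
case: ifP => [/eqP d1 | /negbT d_neq1].
  have cardSI : #|S| = (q * #|I|)%N by rewrite cardI cardS -expnS; congr (_ ^ _)%N; lia.
  have perpSI : perp S \subset perp I.
    apply/subsetP => a /[!inE] /forall_inP aS; apply/forall_inP => h hI.
    by rewrite aS ?(subsetP IS).
  have -> : [set a in perp I | perp_in S a \subset I] = perp I :\: perp S.
    apply/setP => a; rewrite in_setD in_set andbC.
    by case: (boolP (a \in perp I)) => aI; rewrite ?andbT ?andbF // perp_in_sub_codim1.
  have perpS : (#|perp S| * q)%N = #|perp I|.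
    apply/eqP; rewrite -(eqn_pmul2r I_gt0) -mulnA -cardSI perpI.
    by rewrite (card_perp chiD chi_norm chi_nontriv sS).
  have q_neq0 : (q%:R : rat) != 0 by rewrite pnatr_eq0 -lt0n ltnW.
  rewrite cardsD (setIidPr perpSI) natrB ?subset_leq_card // -perpI -perpS !natrM.
  by rewrite mulfK // mulrBr mulr1 mulfK.
have cardSI : (q * (q * #|I|) <= #|S|)%N by rewrite cardI cardS -!expnS leq_exp2l //; lia.
have -> : [set a in perp I | perp_in S a \subset I] = set0.
  by apply/setP => a; rewrite !inE (negbTE (perp_in_sub_codim2 a cardSI)) andbF.
by rewrite cards0 mulr0.
Qed.

End Counting.

Section TruncatedRing.
Variables (F : finFieldType) (v n : nat).
Local Notation mono := (mono v n).
Local Notation R := (Rq F v n).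
Local Notation x_ := (Rvar F n).
Implicit Types (a b k m : mono) (f g r : R) (I J : {set R}).

Definition mdeg m : nat := (\sum_i (val m i : nat))%N.

Definition mdvd a k := [forall i, (val a i : nat) <= val k i]%N.

Lemma eq_mono a b : (forall i, (val a i : nat) = val b i) -> a = b.
Proof. by move=> ab; apply/val_inj/ffunP => i; apply/val_inj/ab. Qed.

(* [mdiv k a] is the monomial k / a; exponents are truncated when a does not divide k. *)
Definition mdiv_fun k a : {ffun 'I_v -> 'I_n} :=
  [ffun i => Ordinal (leq_ltn_trans (leq_subr (val a i) (val k i)) (ltn_ord (val k i)))].

Fact mdiv_fun_deg k a : (\sum_i (mdiv_fun k a i : nat) < n)%N.
Proof. by apply/(leq_ltn_trans _ (valP k))/leq_sum => i _; rewrite ffunE leq_subr. Qed.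

Definition mdiv k a : mono := exist _ (mdiv_fun k a) (mdiv_fun_deg k a).

Lemma mdivE k a i : (val (mdiv k a) i : nat) = (val k i - val a i)%N.
Proof. by rewrite /= ffunE. Qed.

Lemma mdegD k a : mdvd a k -> (mdeg (mdiv k a) + mdeg a)%N = mdeg k.
Proof.
move/forallP => ak; rewrite /mdeg -big_split; apply: eq_bigr => i _.
by rewrite ffunE /= subnK.
Qed.

Lemma big_mono_complement a k (G : mono -> F) :
  \sum_(b : mono | [forall i, ((val a i : nat) + val b i)%N == val k i]) G b =
  if mdvd a k then G (mdiv k a) else 0.
Proof.
case: ifP => [ak|/negP ak].
  rewrite (big_pred1 (mdiv k a)) // => b /=; apply/forallP/eqP => [abk|->{b} i].
    by apply: eq_mono => i; rewrite mdivE -(eqP (abk i)) addKn.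
  by rewrite mdivE subnKC //; move/forallP: ak.
rewrite big1 // => b /forallP abk; case: ak; apply/forallP => i.
by rewrite -(eqP (abk i)) leq_addr.
Qed.

Lemma RmulE f g k :
  Rmul f g k = \sum_a f a * (if mdvd a k then g (mdiv k a) else 0).
Proof. by rewrite ffunE; apply: eq_bigr => a _; rewrite -mulr_sumr big_mono_complement. Qed.

Lemma Rmul_delta m f k : Rmul (delta m) f k = if mdvd m k then f (mdiv k m) else 0.
Proof.
rewrite RmulE (bigD1 m) //= big1 ?addr0 => [|a /negbTE am]; first by rewrite ffunE eqxx mul1r.
by rewrite ffunE am mul0r.
Qed.

Lemma Rmul_sum_delta r f : Rmul r f = \sum_m r m *: Rmul (delta m) f.
Proof.
by apply/ffunP => k; rewrite RmulE sum_ffunE; apply: eq_bigr => a _; rewrite ffunZE Rmul_delta.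
Qed.

Lemma RmulDr r f g : Rmul r (f + g) = Rmul r f + Rmul r g.
Proof.
apply/ffunP => k; rewrite ffunDE !RmulE -big_split /=; apply: eq_bigr => a _.
by case: ifP; rewrite ?ffunDE ?mulr0 ?addr0 // mulrDr.
Qed.

Lemma RmulBr r f g : Rmul r (f - g) = Rmul r f - Rmul r g.
Proof.
apply/ffunP => k; rewrite ffunBE !RmulE -sumrB; apply: eq_bigr => a _.
by case: ifP; rewrite ?ffunBE ?mulr0 ?subr0 // mulrBr.
Qed.

Lemma Rmulr0 r : Rmul r 0 = 0.
Proof. by have := RmulBr r 0 0; rewrite !subrr. Qed.

Lemma RmulZr r c f : Rmul r (c *: f) = c *: Rmul r f.
Proof.
apply/ffunP => k; rewrite ffunZE !RmulE mulr_sumr; apply: eq_bigr => a _.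
by case: ifP; rewrite ?ffunZE ?mulr0 // mulrCA.
Qed.

Lemma RmulZl r c f : Rmul (c *: r) f = c *: Rmul r f.
Proof.
apply/ffunP => k; rewrite ffunZE !RmulE mulr_sumr; apply: eq_bigr => a _.
by rewrite ffunZE mulrA.
Qed.

Section Ideal.
Variable I : {set R}.
Hypothesis idI : is_ideal I.

Lemma ideal0 : 0 \in I.
Proof. by case: idI. Qed.

Lemma idealB f g : f \in I -> g \in I -> f - g \in I.
Proof. by case: idI => _ + _; apply. Qed.

Lemma idealMl r f : f \in I -> Rmul r f \in I.
Proof. by case: idI => _ _; apply. Qed.

Lemma idealD f g : f \in I -> g \in I -> f + g \in I.
Proof. by move=> fI gI; rewrite -[g]opprK -[- g]sub0r !idealB ?ideal0. Qed.

Lemma ideal_sum (U : finType) (P : pred U) (G : U -> R) :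
  (forall u, P u -> G u \in I) -> \sum_(u | P u) G u \in I.
Proof. by move=> GI; apply: (big_ind (fun f => f \in I)); [exact: ideal0 | exact: idealD |]. Qed.

End Ideal.

Definition vanish_below f d := forall k, (mdeg k < d)%N -> f k = 0.

Lemma vanish_below_n f : vanish_below f n -> f = 0.
Proof. by move=> f0; apply/ffunP => k; rewrite ffunE f0 //; exact: valP k. Qed.

Lemma sum_delta_nat i : (\sum_(j < v) (j == i : nat))%N = 1%N.
Proof. by rewrite (bigD1 i) //= eqxx big1 // => j /negbTE ->. Qed.

Lemma vanish_below_Rvar i f d : vanish_below f d -> vanish_below (Rmul (x_ i) f) d.+1.
Proof.
move=> f0 k k_lt; rewrite RmulE big1 // => a _; rewrite ffunE.
case: ifP => [/forallP ai|_]; last by rewrite mul0r.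
case: ifP => [ak|_]; last by rewrite mulr0.
rewrite f0 ?mulr0 //; have := mdegD ak.
have -> : mdeg a = 1%N by rewrite /mdeg -(sum_delta_nat i); apply: eq_bigr => j _; apply/eqP.
lia.
Qed.

Lemma ideal_meets_soc_pre I J f : is_ideal I -> is_ideal J -> f \in J -> f \notin I ->
  exists2 g, g \in J :\: I & g \in soc_pre I.
Proof.
move=> idI idJ.
(* Multiplying by a variable raises the degree below which an element vanishes,
   and only 0 vanishes below degree n, so the descent reaches the socle. *)
suff descend d : forall f, f \in J -> f \notin I -> vanish_below f (n - d) ->
    exists2 g, g \in J :\: I & g \in soc_pre I.
  by move=> fJ fI; apply: (descend n f fJ fI) => k; rewrite subnn.
elim: d => [|d IHd] {}f fJ fI f0.
  by move: fI; rewrite subn0 in f0; rewrite (vanish_below_n f0) ideal0.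
have [/forallP fsoc|] := boolP [forall i, Rmul (x_ i) f \in I].
  by exists f; rewrite !inE ?fJ ?fI //; apply/forallP.
rewrite negb_forall => /existsP [i xfI].
apply: (IHd (Rmul (x_ i) f)) => //; first exact: idealMl.
move=> k k_lt; apply: (vanish_below_Rvar _ f0); lia.
Qed.

Section Unit.
Hypothesis n_gt0 : (0 < n)%N.

Definition mono1_fun : {ffun 'I_v -> 'I_n} := [ffun _ => Ordinal n_gt0].

Fact mono1_deg : (\sum_i (mono1_fun i : nat) < n)%N.
Proof. by rewrite big1 // => i _; rewrite ffunE. Qed.

Definition mono1 : mono := exist _ mono1_fun mono1_deg.

Lemma mono1E i : (val mono1 i : nat) = 0%N.
Proof. by rewrite /= ffunE. Qed.

Lemma Rmul1 f : Rmul (delta mono1) f = f.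
Proof.
apply/ffunP => k; rewrite Rmul_delta.
have -> : mdvd mono1 k by apply/forallP => i; rewrite mono1E.
by congr (f _); apply: eq_mono => i; rewrite mdivE mono1E subn0.
Qed.

Lemma idealZ I c f : is_ideal I -> f \in I -> c *: f \in I.
Proof. by move=> idI fI; rewrite -(Rmul1 f) -RmulZl idealMl. Qed.

Lemma ideal_submod_closed I : is_ideal I -> GRing.submod_closed I.
Proof. by move=> idI; split=> [|c f g fI gI]; rewrite ?ideal0 ?idealD ?idealZ. Qed.

Section Var.
Variables (i : 'I_v) (n_gt1 : (1 < n)%N).

Definition var_mono_fun : {ffun 'I_v -> 'I_n} :=
  [ffun j => Ordinal (leq_ltn_trans (leq_b1 (j == i)) n_gt1)].

Fact var_mono_deg : (\sum_j (var_mono_fun j : nat) < n)%N.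
Proof. by rewrite (eq_bigr (fun j => nat_of_bool (j == i))) ?sum_delta_nat // => j; rewrite ffunE. Qed.

Definition var_mono : mono := exist _ var_mono_fun var_mono_deg.

Lemma var_monoE j : (val var_mono j : nat) = (j == i).
Proof. by rewrite /= ffunE. Qed.

Lemma Rvar_delta : x_ i = delta var_mono.
Proof.
apply/ffunP => k; rewrite !ffunE; congr (if _ then _ else _).
apply/forallP/eqP => [ki|-> j]; last by rewrite var_monoE.
by apply: eq_mono => j; rewrite var_monoE; apply/eqP.
Qed.

Lemma Rmul_delta_var m f : (val m i : nat) != 0%N ->
  Rmul (delta m) f = Rmul (delta (mdiv m var_mono)) (Rmul (x_ i) f).
Proof.
move=> mi; have ei j : (val var_mono j <= val m j)%N.
  by rewrite var_monoE; case: eqP => [->|]; rewrite ?lt0n.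
rewrite Rvar_delta; apply/ffunP => k; rewrite !Rmul_delta.
have [/forallP mk | /forallP mk] := boolP (mdvd m k).
  have -> : mdvd (mdiv m var_mono) k.
    by apply/forallP => j; rewrite mdivE; have := mk j; have := ei j; lia.
  have -> : mdvd var_mono (mdiv k (mdiv m var_mono)).
    by apply/forallP => j; rewrite !mdivE; have := mk j; have := ei j; lia.
  congr (f _); apply: eq_mono => j.
  by rewrite !mdivE; have := mk j; have := ei j; lia.
case: ifP => // /forallP mk1; case: ifP => // /forallP mk2; case: mk => j.
by have := mk1 j; have := mk2 j; rewrite !mdivE; have := ei j; lia.
Qed.

End Var.

Lemma soc_pre_Rmul_delta I f m : is_ideal I -> f \in soc_pre I -> m != mono1 ->
  Rmul (delta m) f \in I.
Proof.
move=> idI /[!inE] /forallP fsoc m_neq1.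
have [i mi] : exists i, (val m i : nat) != 0%N.
  apply/existsP; apply: contraNT m_neq1; rewrite negb_exists => /forallP m0.
  by apply/eqP/eq_mono => i; rewrite mono1E; apply/eqP/negPn.
have n_gt1 : (1 < n)%N.
  have : (val m i <= mdeg m)%N by rewrite /mdeg (bigD1 i) //= leq_addr.
  by have := valP m; rewrite -/(mdeg m); lia.
by rewrite (Rmul_delta_var n_gt1 f mi) idealMl.
Qed.

Lemma soc_pre_Rmul I f r : is_ideal I -> f \in soc_pre I -> Rmul r f - r mono1 *: f \in I.
Proof.
move=> idI fsoc; rewrite Rmul_sum_delta (bigD1 mono1) //= Rmul1 addrC addrK.
by apply: ideal_sum => // m m_neq1; rewrite idealZ // soc_pre_Rmul_delta.
Qed.

Lemma soc_pre_submod_closed I : is_ideal I -> GRing.submod_closed (soc_pre I).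
Proof.
move=> idI; split=> [|c f g]; rewrite !inE; first by apply/forallP => i; rewrite Rmulr0 ideal0.
move=> /forallP fsoc /forallP gsoc; apply/forallP => i.
by rewrite RmulDr RmulZr idealD ?idealZ.
Qed.

Lemma sub_soc_pre I : is_ideal I -> I \subset soc_pre I.
Proof. by move=> idI; apply/subsetP => f fI; rewrite inE; apply/forallP => i; rewrite idealMl. Qed.

(* R acts on soc_pre I / I through constant terms (soc_pre_Rmul). *)
Lemma is_ideal_add_line I f : is_ideal I -> f \in soc_pre I ->
  is_ideal [set g : R | [exists c, g - c *: f \in I]].
Proof.
move=> idI fsoc; split.
- by rewrite inE; apply/existsP; exists 0; rewrite scale0r subr0 ideal0.
- move=> g h /[!inE] /existsP [c gI] /existsP [d hI]; apply/existsP; exists (c - d).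
  have -> : g - h - (c - d) *: f = (g - c *: f) - (h - d *: f).
    by rewrite scalerBl !opprB addrACA [RHS]addrACA (addrC (- h)).
  exact: idealB.
- move=> r g /[!inE] /existsP [c gI]; apply/existsP; exists (c * r mono1).
  have -> : Rmul r g - (c * r mono1) *: f = Rmul r (g - c *: f) + c *: (Rmul r f - r mono1 *: f).
    by rewrite RmulBr RmulZr scalerBr scalerA addrA subrK.
  by rewrite idealD ?idealMl ?idealZ ?soc_pre_Rmul.
Qed.

End Unit.

End TruncatedRing.

Section IdealCharacters.
Variables (F : finFieldType) (v n : nat).
Local Notation R := (Rq F v n).
Variable chi : F -> algC.
Hypotheses (chiD : forall s t, chi (s + t) = chi s * chi t) (chi_norm : forall t, `|chi t| = 1).
Hypothesis chi_nontriv : exists u, chi u != 1.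
Hypothesis n_gt0 : (0 < n)%N.

Lemma max_ideal_in_ker_char_of (I : {set R}) a : is_ideal I ->
  max_ideal_in_ker I (char_of chi a) <->
  a \in [set a in perp I | perp_in (soc_pre I) a \subset I].
Proof.
move=> idI; have char_eq1 J (idJ : is_ideal J) :=
  char_of_eq1 chiD chi_norm chi_nontriv a (ideal_submod_closed n_gt0 idJ).
rewrite inE; split=> [[Iker Imax] | /andP [aI aSI]].
  have aI : a \in perp I by apply/(char_eq1 I idI).
  rewrite aI; apply/subsetP => f; rewrite [f \in _]inE => /andP [fsoc /eqP af].
  have /subsetP : [set g : R | [exists c, g - c *: f \in I]] \subset I.
    apply: Imax (is_ideal_add_line n_gt0 idI fsoc) _ => g /[!inE] /existsP [c gI].
    rewrite /in_ker ffunE -(subrK (c *: f) g) dotDr dotZr af mulr0 addr0.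
    by move: aI => /[!inE] /forall_inP /(_ _ gI) /eqP ->; apply: chi0.
  by apply; rewrite inE; apply/existsP; exists 1; rewrite scale1r subrr ideal0.
split=> [|J idJ Jker]; first exact/(char_eq1 I idI).
apply/subsetP => f fJ; apply/negPn/negP => fI.
have [g /[!inE] /andP [gI gJ] gsoc] := ideal_meets_soc_pre idI idJ fJ fI.
have /[!inE] /forall_inP aJ := (char_eq1 J idJ).1 Jker.
by move/negP: gI; apply; apply: (subsetP aSI); rewrite !inE gsoc aJ.
Qed.

End IdealCharacters.

Unset Implicit Arguments. Set Strict Implicit.

Theorem lemma6p3 (F : finFieldType) (v n : nat) (Hv : (1 <= v)%N) (Hn : (1 <= n)%N)
    (I : {set Rq F v n}) (HI : is_ideal I) :
  exists s : seq {ffun Rq F v n -> algC},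
    [/\ uniq s,
        (forall psi, psi \in s <-> (is_add_char psi /\ max_ideal_in_ker I psi)) &
        (size s)%:R =
          (#|[set: Rq F v n]|%:R / #|I|%:R : rat) *
          (if dim_soc I == 0%N then 1
           else if dim_soc I == 1%N then 1 - (#|F|%:R)^-1 else 0)].
Proof.
have [chi [chiD chi_norm chi_nontriv]] := nontrivial_additive_char F.
have char_max := max_ideal_in_ker_char_of chiD chi_norm chi_nontriv Hn _ HI.
exists (map (char_of chi) (enum [set a in perp I | perp_in (soc_pre I) a \subset I])); split.
- by rewrite map_inj_uniq ?enum_uniq //; apply: char_of_inj chi_nontriv.
- move=> psi; split=> [/mapP [a] /[!mem_enum] /char_max aA -> | [[psi_norm psiD] psi_max]].
    by split; first split; [exact: char_of_norm | exact: char_ofD |].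
  have [a psiE] := char_of_surj chiD chi_norm chi_nontriv psi_norm psiD.
  have {psiE} psiE : psi = char_of chi a by apply/ffunP.
  by rewrite psiE map_f // mem_enum -char_max -psiE.
- rewrite size_map -cardE cardsT card_perp_in_sub ?sub_soc_pre //.
  + exact: ideal_submod_closed.
  + exact: soc_pre_submod_closed.
Qed.
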